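(* For all $n\ge1$ and all integers $h$ with $0\le h\le \frac12n^2-\frac52n$, $|\mathcal C^h_n| \ge n^{n-2}\left(\frac{n^2-3n}{2(n+h)}\right)^h$.
   Context: Graphs are finite and simple. For an integer $h\ge0$, $\mathcal C^h_n$ is the set of connected graphs on vertex set $[n]$ with at most $h+n-1$ edges. *)

From mathcomp Require Import all_boot all_order all_algebra.
Set Implicit Arguments. Unset Strict Implicit. Unset Printing Implicit Defensive.
Import Order.TTheory GRing.Theory Num.Theory.

Definition simple_graph (n : nat) (E : {set {set 'I_n}}) : bool :=
  [forall e in E, #|e| == 2].

Definition adj (n : nat) (E : {set {set 'I_n}}) : rel 'I_n :=
  fun x y => [set x; y] \in E.

Definition connected_graph (n : nat) (E : {set {set 'I_n}}) : bool :=
  [forall x, forall y, connect (adj E) x y].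

Definition Chn (h n : nat) : {set {set {set 'I_n}}} :=
  [set E : {set {set 'I_n}} |
     [&& simple_graph E, connected_graph E & #|E| <= h + n - 1]].

From mathcomp Require Import all_boot all_order all_algebra.
From mathcomp Require Import zify.
Set Implicit Arguments. Unset Strict Implicit. Unset Printing Implicit Defensive.
Import Order.TTheory GRing.Theory Num.Theory.

(* A Prüfer-type decoding turns each word of length n - 2 over [n] into a
   parent function towards a fixed root, hence into a spanning tree, and
   distinct words give distinct trees: the set of leaves removed at each step,
   and then the next letter, can be read off the tree.  So there are at least
   n^(n-2) spanning trees.  Adding to a spanning tree any h of its
   a = C(n,2) - (n-1) non-edges yields a graph of C^h_n, and a graph of C^h_n
   arises in at most C(b,h) ways, b = h + n - 1, since the added edges form an
   h-subset of its edges.  Hence |C^h_n| >= n^(n-2) C(a,h) / C(b,h), and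
   C(a,h) / C(b,h) >= (a/b)^h >= ((n^2 - 3n) / (2(n+h)))^h as h <= b <= a. *)

Lemma adj_sym n (E : {set {set 'I_n}}) : symmetric (adj E).
Proof. by move=> x y; rewrite /adj setUC. Qed.

Lemma connected_graph_subset n (E F : {set {set 'I_n}}) :
  E \subset F -> connected_graph E -> connected_graph F.
Proof.
move=> /subsetP sEF /'forall_forallP conn_E; apply/'forall_forallP => x y.
by apply: connect_sub (conn_E x y) => u v Euv; apply/connect1/sEF.
Qed.

Section ParentFunctions.
Variables (n : nat) (r : 'I_n).
Notation V := 'I_n.

Definition rooted (p : V -> V) := forall v, exists k, iter k p v = r.

Definition parent_edges (p : V -> V) : {set {set V}} :=
  [set [set v; p v] | v in [set~ r]].

Lemma rooted_neq p v : rooted p -> v != r -> p v != v.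
Proof.
move=> rooted_p; apply: contra => /eqP pv; have [k <-] := rooted_p v.
by rewrite iter_fix.
Qed.

Lemma rooted_2cycle p v : rooted p -> p (p v) = v -> (v == r) || (p v == r).
Proof.
move=> rooted_p ppv; have [k <-] := rooted_p v; rewrite eq_sym [p v == _]eq_sym.
elim: k => [|k]; first by rewrite eqxx.
by rewrite iterS => /orP[] /eqP ->; rewrite ?ppv eqxx ?orbT.
Qed.

Lemma parent_edges_inj p q : rooted p -> rooted q ->
  parent_edges p = parent_edges q -> {in [set~ r], p =1 q}.
Proof.
move=> rooted_p rooted_q Epq v; rewrite in_setC1 => vr.
(* Induction on the distance from [v] to [r] along [q]: if the edge [{v, q v}]
   of [p] is not [{v, p v}], it is [{q v, p (q v)}] and [v], [q v] form a
   2-cycle of [q]. *)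
have [k] := rooted_q v; elim: k v vr => [|k IH] v vr.
  by move=> /= vr'; rewrite vr' eqxx in vr.
rewrite iterSr => qk.
have : [set v; q v] \in parent_edges p by rewrite Epq; apply: imset_f; rewrite in_setC1.
case/imsetP => w; rewrite in_setC1 => wr Evw.
have w_in : w \in [set v; q v] by rewrite Evw set21.
have pw_in : p w \in [set v; q v] by rewrite Evw set22.
have [wv|wv] := eqVneq w v.
  by move: pw_in; rewrite !inE wv (negbTE (rooted_neq rooted_p vr)) => /eqP.
move: w_in; rewrite !inE (negbTE wv) /= => /eqP wq.
have pwv : p w = v.
  by move: pw_in; rewrite !inE -wq (negbTE (rooted_neq rooted_p wr)) orbF => /eqP.
have qr : q v != r by rewrite -wq.
have qqv : q (q v) = v by rewrite -(IH _ qr qk) -wq.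
by have := rooted_2cycle rooted_q qqv; rewrite (negbTE vr) (negbTE qr).
Qed.

Lemma parent_edges_connected p : rooted p -> connected_graph (parent_edges p).
Proof.
move=> rooted_p.
have to_root x : connect (adj (parent_edges p)) x r.
  have [k] := rooted_p x; elim: k x => [|k IH] x; first by move=> /= ->.
  rewrite iterSr => /IH; have [->|xr] := eqVneq x r; first by rewrite connect0.
  apply: connect_trans; apply/connect1; apply: imset_f; by rewrite in_setC1.
apply/'forall_forallP => x y; apply: connect_trans (to_root x) _.
by rewrite (sym_connect_sym (@adj_sym _ _)).
Qed.

Lemma parent_edges_simple p : rooted p -> simple_graph (parent_edges p).
Proof.
move=> rooted_p; apply/forall_inP => e /imsetP[v]; rewrite in_setC1 => vr ->.
by rewrite cards2 [v == _]eq_sym rooted_neq.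
Qed.

Lemma card_parent_edges p : #|parent_edges p| <= n.-1.
Proof. by apply: leq_trans (leq_imset_card _ _) _; rewrite cardsC1 card_ord. Qed.

End ParentFunctions.

Section PruferDecoding.
Variables (n : nat) (r : 'I_n).
Notation V := 'I_n.

(* [D] holds the vertices already detached.  Each step detaches some leaf,
   i.e. a vertex outside [r |: D] absent from the rest of the code, and makes
   the head of the code its parent; the vertices left at the end hang from
   [r].  Which leaf is picked does not matter: the set of leaves can be read
   off the decoded parent function (see [prufer_leafE]). *)
Definition prufer_leaf (D : {set V}) (s : seq V) (v : V) : bool :=
  (v \notin r |: D) && (v \notin s).

Fixpoint prufer_decode (s : seq V) (D : {set V}) : V -> V :=
  if s is a :: s' then
    if [pick v | prufer_leaf D s v] is Some l then
      fun v => if v == l then a else prufer_decode s' (l |: D) v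
    else fun _ => r
  else fun _ => r.

Lemma prufer_decode_mem s D v : prufer_decode s D v \in r :: s.
Proof.
elim: s D => [|a s IH] D /=; first exact: mem_head.
case: pickP => [l _|_]; last exact: mem_head.
case: (v == l); first by rewrite !inE eqxx orbT.
by have := IH (l |: D); rewrite !inE => /orP[->|->]; rewrite ?orbT.
Qed.

Lemma prufer_decode_rooted s D : rooted r (prufer_decode s D).
Proof.
elim: s D => [|a s IH] D v /=; first by exists 1.
case: pickP => [l /andP[]|_]; last by exists 1.
rewrite in_setU1 in_cons => /norP[lr _] /norP[la ls].
set q := prufer_decode s (l |: D); set p := fun v => if v == l then a else q v.
have q_neq_l w : q w != l.
  have := prufer_decode_mem s (l |: D) w; rewrite -/q.
  by apply: contraTneq => ->; rewrite in_cons negb_or lr.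
have iter_pq w k : w != l -> iter k p w = iter k q w.
  move=> wl; elim: k => //= k ->; rewrite /p.
  by case: k => [|k] /=; rewrite ?(negbTE wl) ?(negbTE (q_neq_l _)).
have [vl|vl] := eqVneq v l; last by have [k qk] := IH (l |: D) v; exists k; rewrite iter_pq.
have [k qk] := IH (l |: D) a; exists k.+1.
by rewrite iterSr /p vl eqxx iter_pq // eq_sym.
Qed.

Lemma prufer_decode_fixed (s : seq V) (D : {set V}) v :
  v \in r |: D -> prufer_decode s D v = r.
Proof.
elim: s D => [|a s IH] D vD //=.
case: pickP => [l /andP[lrD _]|//].
have -> : (v == l) = false by apply: contraTF vD => /eqP->.
by apply: IH; move: vD; rewrite !in_setU1 => /orP[->|->]; rewrite ?orbT.
Qed.

Lemma prufer_leaf_exists (D : {set V}) (s : seq V) :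
  #|D| + size s + 2 <= n -> exists v, prufer_leaf D s v.
Proof.
move=> room; apply/existsP; apply: contraLR room => /existsPn no_leaf.
have cover : [set: V] \subset r |: (D :|: [set x in s]).
  apply/subsetP => x _; have := no_leaf x; rewrite /prufer_leaf !inE.
  by case: (x == r); case: (x \in D); case: (x \in s).
have card_cover : #|r |: (D :|: [set x in s])| <= (#|D| + size s).+1.
  rewrite cardsU1 -add1n leq_add ?leq_b1 //.
  apply: leq_trans (leq_card_setU _ _).1 _.
  by rewrite leq_add2l cardsE card_size.
have := leq_trans (subset_leq_card cover) card_cover.
rewrite cardsT card_ord; lia.
Qed.

Lemma prufer_decode_onto (s : seq V) (D : {set V}) v :
  #|D| + size s + 2 <= n -> v \in s -> v \in prufer_decode s D @: ~: (r |: D).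
Proof.
elim: s D => [|a s IH] D //= room.
have [l0 leaf_l0] := prufer_leaf_exists (s := a :: s) room.
case: pickP => [l|/(_ l0)]; last by rewrite leaf_l0.
rewrite /prufer_leaf in_cons => /andP[lrD /norP[la ls]].
rewrite in_cons => /predU1P[->|vs].
  by apply/imsetP; exists l; rewrite ?in_setC ?eqxx.
have room' : #|l |: D| + size s + 2 <= n.
  by move: lrD room; rewrite in_setU1 cardsU1 => /norP[_ ->]; rewrite add1n addSnnS.
have /imsetP[w] := IH (l |: D) room' vs.
rewrite !inE negb_or => /andP[wr /norP[wl wD] ->].
by apply/imsetP; exists w; rewrite ?inE ?negb_or ?wr ?(negbTE wl).
Qed.

Lemma prufer_leafE (s : seq V) (D : {set V}) v : #|D| + size s + 2 <= n ->
  prufer_leaf D s v = (v \notin r |: D) && (v \notin prufer_decode s D @: ~: (r |: D)).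
Proof.
move=> room; rewrite /prufer_leaf; case: (boolP (v \in r |: D)) => //= vrD.
apply/idP/idP; apply: contra; last exact: prufer_decode_onto.
case/imsetP => w _ vw; have := prufer_decode_mem s D w.
by rewrite -vw in_cons => /predU1P[vr|//]; rewrite vr setU11 in vrD.
Qed.

Lemma prufer_decode_inj (s s' : seq V) (D : {set V}) :
  size s = size s' -> #|D| + size s + 2 <= n ->
  prufer_decode s D =1 prufer_decode s' D -> s = s'.
Proof.
elim: s s' D => [|a s IH] [|a' s'] D // [size_ss'] room eq_dec.
have room' : #|D| + size (a' :: s') + 2 <= n by rewrite /= -size_ss'.
have same_leaves : prufer_leaf D (a :: s) =1 prufer_leaf D (a' :: s').
  by move=> v; rewrite !prufer_leafE // (eq_imset _ eq_dec).
move: eq_dec; rewrite /= (eq_pick same_leaves).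
have [l0 leaf_l0] := prufer_leaf_exists room'.
case: pickP => [l /andP[lrD _]|/(_ l0)]; last by rewrite leaf_l0.
move=> eq_dec; have := eq_dec l; rewrite eqxx => ->; congr cons.
apply: IH (l |: D) size_ss' _ _.
  by move: lrD room; rewrite in_setU1 cardsU1 => /norP[_ ->]; rewrite add1n addSnnS.
move=> v; have [->|vl] := eqVneq v l.
  by rewrite !prufer_decode_fixed // !inE eqxx orbT.
by have := eq_dec v; rewrite (negbTE vl).
Qed.

End PruferDecoding.

Lemma card_trees_ge n : 1 < n -> n ^ (n - 2) <= #|Chn 0 n|.
Proof.
move=> n_gt1; pose r : 'I_n := Ordinal (ltnW n_gt1).
pose tree (t : (n - 2).-tuple 'I_n) := parent_edges r (prufer_decode r t set0).
have tree_inj : injective tree.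
  move=> t t' eq_tree; apply: val_inj.
  apply: (@prufer_decode_inj _ r _ _ set0); rewrite ?size_tuple ?cards0 ?add0n ?subnK //.
  move=> v; have [->|vr] := eqVneq v r; first by rewrite !prufer_decode_fixed ?setU11.
  have rooted_dec := @prufer_decode_rooted _ r _ set0.
  by apply: (parent_edges_inj (rooted_dec _) (rooted_dec _) eq_tree); rewrite in_setC1.
rewrite -[n in n ^ _]card_ord -card_tuple -(card_imset _ tree_inj).
apply/subset_leq_card/subsetP => _ /imsetP[t _ ->].
have rooted_t := prufer_decode_rooted r t set0.
rewrite inE parent_edges_simple // parent_edges_connected //=.
by rewrite add0n subn1 card_parent_edges.
Qed.

Lemma card_setX_dep (T1 T2 : finType) (A : {set T1}) (F : T1 -> {set T2}) :
  #|[set p : T1 * T2 | (p.1 \in A) && (p.2 \in F p.1)]| = \sum_(a in A) #|F a|.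
Proof.
rewrite (eq_bigr (fun a => \sum_(b in F a) 1)) => [|a _]; last by rewrite sum1_card.
by rewrite pair_big_dep -sum1_card; apply: eq_bigl => p; rewrite inE.
Qed.

Lemma setUDK_disjoint (T : finType) (A B : {set T}) :
  [disjoint A & B] -> (A :|: B) :\: B = A.
Proof. by move=> /setDidPl AB; rewrite setDUl setDv setU0 AB. Qed.

Section AddingEdges.
Variables (n k h : nat).
Hypothesis n_gt0 : 0 < n.
Notation V := 'I_n.

Definition pairs : {set {set V}} := [set e : {set V} | #|e| == 2].

Lemma card_pairs : #|pairs| = 'C(n, 2).
Proof. by rewrite card_draws card_ord. Qed.

Lemma Chn_setU (E S : {set {set V}}) : E \in Chn k n -> S \subset pairs -> #|S| <= h ->
  E :|: S \in Chn (k + h) n.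
Proof.
rewrite !inE => /and3P[simple_E conn_E card_E] /subsetP S_pairs card_S.
apply/and3P; split.
- apply/forall_inP => e; rewrite inE => /orP[eE|eS]; first exact: (forall_inP simple_E).
  by have := S_pairs e eS; rewrite inE.
- exact: connected_graph_subset (subsetUl _ _) conn_E.
- apply: leq_trans (leq_card_setU _ _).1 _.
  by apply: leq_trans (leq_add card_E card_S) _; lia.
Qed.

Lemma card_Chn_add_edges :
  #|Chn k n| * 'C('C(n, 2) - (k + n - 1), h) <= #|Chn (k + h) n| * 'C(k + h + n - 1, h).
Proof.
pose h_subsets (G : {set {set V}}) := [set S : {set {set V}} | S \subset G & #|S| == h].
pose extensions (E : {set {set V}}) := h_subsets (pairs :\: E).
pose X := [set p | (p.1 \in Chn k n) && (p.2 \in extensions p.1)].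
pose Y := [set p | (p.1 \in Chn (k + h) n) && (p.2 \in h_subsets p.1)].
have le_X : #|Chn k n| * 'C('C(n, 2) - (k + n - 1), h) <= #|X|.
  rewrite card_setX_dep -sum_nat_const; apply: leq_sum => E.
  rewrite inE => /and3P[_ _ card_E].
  rewrite cards_draws leq_bin2l // cardsD card_pairs leq_sub2l //.
  exact: leq_trans (subset_leq_card (subsetIr _ _)) card_E.
have le_Y : #|Y| <= #|Chn (k + h) n| * 'C(k + h + n - 1, h).
  rewrite card_setX_dep -sum_nat_const; apply: leq_sum => G.
  rewrite inE => /and3P[_ _ card_G].
  by rewrite cards_draws leq_bin2l.
suff : #|X| <= #|Y| by move=> le_XY; apply: leq_trans le_X (leq_trans le_XY le_Y).
have disj (E S : {set {set V}}) : S \subset pairs :\: E -> [disjoint E & S].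
  move=> sub_S; rewrite disjoint_sym disjoints_subset.
  by apply: subset_trans sub_S _; rewrite setDE subsetIr.
rewrite -(@card_in_imset _ _ (fun p => (p.1 :|: p.2, p.2)) X).
  apply/subset_leq_card/subsetP => q /imsetP[[E S]].
  rewrite inE /= => /andP[E_C]; rewrite inE => /andP[sub_S /eqP card_S] ->.
  have S_pairs : S \subset pairs := subset_trans sub_S (subsetDl _ _).
  by rewrite inE /= Chn_setU ?card_S // inE subsetUr card_S eqxx.
move=> [E S] [E' S']; rewrite !inE /= => /and3P[_ sub_S _] /and3P[_ sub_S' _] [eq_ES eq_S].
subst S'; congr pair.
by rewrite -(setUDK_disjoint (disj _ _ sub_S)) eq_ES setUDK_disjoint ?disj.
Qed.

End AddingEdges.

Lemma leq_ffact_ratio a b h : b <= a -> b ^_ h * a ^ h <= a ^_ h * b ^ h.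
Proof.
move=> le_ba; elim: h => // h IH.
rewrite !ffactnSr !expnSr mulnACA [leqRHS]mulnACA leq_mul //.
have [le_bh|lt_hb] := leqP b h; first by rewrite (eqP (_ : b - h == 0)) ?subn_eq0.
by rewrite !mulnBl mulnC; apply: leq_sub2l; rewrite leq_mul2l le_ba orbT.
Qed.

Lemma leq_bin_ratio a b h : b <= a -> 'C(b, h) * a ^ h <= 'C(a, h) * b ^ h.
Proof.
move=> le_ba; rewrite -(leq_pmul2r (fact_gt0 h)) mulnAC bin_ffact.
by rewrite [leqRHS]mulnAC bin_ffact leq_ffact_ratio.
Qed.

Local Open Scope ring_scope.

Lemma exprn_ratio_le_bin_ratio (R : numFieldType) a b h : (h <= b <= a)%N ->
  (a%:R / b%:R) ^+ h <= 'C(a, h)%:R / 'C(b, h)%:R :> R.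
Proof.
move=> /andP[le_hb le_ba].
have bh_gt0 : (0 < b ^ h)%N.
  by rewrite expn_gt0; case: h le_hb => [|h] le_hb; rewrite ?orbT // (leq_trans _ le_hb).
rewrite expr_div_n -!natrX ler_pdivrMr ?ltr0n // mulrAC ler_pdivlMr ?ltr0n ?bin_gt0 //.
by rewrite -!natrM ler_nat mulnC leq_bin_ratio.
Qed.

Theorem lemma4 (n h : nat) (hn : (1 <= n)%N) (hh : (2 * h + 5 * n <= n ^ 2)%N) :
  (n%:R ^+ (n - 2)%N) *
    (((n%:R ^+ 2 - 3 * n%:R) / (2 * (n%:R + h%:R))) ^+ h)
  <= (#|Chn h n|)%:R :> rat.
Proof.
have n_ge5 : (5 <= n)%N by nia.
have count := card_Chn_add_edges 0 h hn; rewrite !add0n in count.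
set a := ('C(n, 2) - (n - 1))%N in count; set b := (h + n - 1)%N in count.
have two_a : (2 * a = n ^ 2 - 3 * n + 2)%N.
  by rewrite /a mulnBr -(mul_bin_diag n 1) bin1; nia.
have le_hba : (h <= b <= a)%N by apply/andP; split; lia.
have c_nat : n%:R ^+ 2 - 3 * n%:R = (n ^ 2 - 3 * n)%N%:R :> rat.
  by rewrite natrB ?natrX ?natrM //; nia.
have d_nat : 2 * (n%:R + h%:R) = (2 * (n + h))%N%:R :> rat by rewrite natrM natrD.
have le_ratio : (n ^ 2 - 3 * n)%N%:R / (2 * (n + h))%N%:R <= a%:R / b%:R :> rat.
  rewrite ler_pdivrMr ?ltr0n; last lia.
  rewrite mulrAC ler_pdivlMr ?ltr0n; last lia.
  rewrite -!natrM ler_nat mulnA [(a * 2)%N]mulnC two_a.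
  by apply: leq_mul; [exact: leq_addr | lia].
apply: le_trans (_ : #|Chn 0 n|%:R * ('C(a, h)%:R / 'C(b, h)%:R) <= _); last first.
  by rewrite mulrA ler_pdivrMr ?ltr0n ?bin_gt0 ?(andP le_hba).1 // -!natrM ler_nat.
rewrite c_nat d_nat; apply: ler_pM.
- by rewrite -natrX ler0n.
- by rewrite exprn_ge0 // divr_ge0.
- by rewrite -natrX ler_nat card_trees_ge //; lia.
apply: le_trans (exprn_ratio_le_bin_ratio _ le_hba).
by rewrite lerXn2r // nnegrE divr_ge0.
Qed.
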